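(* Let $N\ge 5$ be odd, and let $G_{N,1}$ be the graph with vertex set $\mathbb Z_N$ in which two distinct vertices $i,j$ are adjacent if and only if $j-i\not\equiv\pm1\pmod N$. Put $\Delta=\sqrt{N(N-4)}$ and $\rho=\frac{N-2+\Delta}{2}$. Then $G_{N,1}$ has $m=\frac{N(N-3)}{2}$ edges, and for $u,v\in\mathbb Z_N$ with $q\in\{0,1,\dots,N-1\}$, $q\equiv v-u\pmod N$, the expected hitting time of $v$ by the simple random walk on $G_{N,1}$ started at $u$ is \[ H^{(1)}(u,v)=\frac{N(N-3)}{\Delta(\rho^N+1)}\left\{\rho^N-1+(-1)^q(\rho^q-\rho^{N-q})\right\}. \]
   Context: The simple random walk moves from the current vertex to a uniformly random neighbour; $H(u,v)$ is the expected number of steps to first reach $v$ starting from $u$. *)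

From HB Require Import structures.
From mathcomp Require Import all_boot all_order all_algebra.
From mathcomp Require Import all_classical all_reals all_analysis.
Set Implicit Arguments. Unset Strict Implicit. Unset Printing Implicit Defensive.
Import Order.TTheory GRing.Theory Num.Theory numFieldNormedType.Exports.
Local Open Scope ring_scope.


(* A simple graph on a finite vertex type T is given by a symmetric irreflexive
   adjacency relation [adj]. *)

Definition graph_edges (T : finType) (adj : rel T) : {set {set T}} :=
  [set e : {set T} | [exists x, exists y, adj x y && (e == [set x; y])]].

Definition deg (T : finType) (adj : rel T) (x : T) : nat := #|[set y | adj x y]|.

Definition srw (R : realType) (T : finType) (adj : rel T) (x y : T) : R :=
  if adj x y then (deg adj x)%:R^-1 else 0.

(* avoid_mass adj u v t x = probability that the walk started at u is at x at
   time t and has not visited v at any of the times 0, ..., t-1. *)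
Fixpoint avoid_mass (R : realType) (T : finType) (adj : rel T) (u v : T)
    (t : nat) (x : T) : R :=
  match t with
  | 0 => (x == u)%:R
  | t'.+1 => \sum_(y : T | y != v) avoid_mass R adj u v t' y * srw R adj y x
  end.

(* First-passage distribution: P_u(T_v = t), where T_v = min {t >= 0 : X_t = v}. *)
Definition first_passage (R : realType) (T : finType) (adj : rel T) (u v : T)
    (t : nat) : R := avoid_mass R adj u v t v.

(* "H is the expected hitting time of v from u": T_v is a.s. finite and
   E[T_v] = sum_t t P(T_v = t) = H. *)
Definition is_hitting_time (R : realType) (T : finType) (adj : rel T) (u v : T)
    (H : R) : Prop :=
  (series (first_passage R adj u v) @ \oo --> (1 : R))%classic /\
  (series (fun t => t%:R * first_passage R adj u v t) @ \oo --> H)%classic.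

Definition GN1 (N : nat) : rel 'I_N :=
  fun i j => [&& i != j, ((nat_of_ord j + N - nat_of_ord i) %% N)%N != 1%N & ((nat_of_ord i + N - nat_of_ord j) %% N)%N != 1%N].
Arguments GN1 N : clear implicits.

(* Let h be nonnegative with h(v) = 0 and h(x) = 1 + (mean of h over the
   neighbours of x) for x <> v.  Then the h-weighted mass of the walk killed at
   v drops at each step by exactly the mass that has not yet hit v, and it is
   at least a fixed fraction of that mass; hence it decays geometrically, which
   shows both that v is hit almost surely and that E[T_v] = h(u).
   In G_{N,1} every vertex x has degree N - 3 and its non-neighbours are x and
   its two cycle neighbours, so for h(x) = f(q), q the forward distance from x
   to v, harmonicity becomes f(q-1) + (N-2) f(q) + f(q+1) = const together with
   a condition on the sum of f.  The roots of the characteristic polynomial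
   X^2 - (N-2) X + 1 are rho and 1/rho, and the stated formula satisfies the
   recurrence, f(0) = f(N) = 0 (N odd) and the sum condition. *)

From HB Require Import structures.
From mathcomp Require Import all_boot all_order all_algebra.
From mathcomp Require Import all_classical all_reals all_analysis.
From mathcomp Require Import ring lra zify.
Set Implicit Arguments. Unset Strict Implicit. Unset Printing Implicit Defensive.
Import Order.TTheory GRing.Theory Num.Theory numFieldNormedType.Exports.
Local Open Scope ring_scope.

Lemma cvg_natmul_expr (R : realType) (z : R) : 0 <= z < 1 ->
  ((fun n => n%:R * z ^+ n) @ \oo --> (0 : R))%classic.
Proof.
case/andP=> z0 z1; set s := Num.sqrt z.
have s0 : 0 <= s := sqrtr_ge0 _.
have s1 : s < 1 by rewrite /s -sqrtr1 ltr_sqrt.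
have zE : z = s ^+ 2 by rewrite sqr_sqrtr.
(* With [z = s^2], [n z^n = s^n (n s^n)] and [n s^n] is at most [1 / (1 - s)]. *)
have natmul_expr_le n : n%:R * s ^+ n * (1 - s) <= 1.
  elim: n => [|n IH]; first by rewrite !mul0r ler01.
  have p0 : 0 <= s ^+ n := exprn_ge0 n s0.
  have p1 : s ^+ n <= 1 := exprn_ile1 n s0 (ltW s1).
  rewrite exprS -addn1 natrD.
  move: IH p0 p1; set p := s ^+ n; set k : R := n%:R => IH p0 p1.
  have : s * (k * p * (1 - s)) <= s by rewrite -[X in _ <= X]mulr1 ler_wpM2l.
  have : s * p * (1 - s) <= 1 - s by rewrite ler_piMl ?subr_ge0 ?(ltW s1) // mulr_ile1 // ltW.
  nra.
apply: (@squeeze_cvgr _ _ _ _ (fun=> 0) (fun n => s ^+ n / (1 - s))).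
- apply: nearW => n; rewrite zE -exprM mulnC exprM.
  have p0 : 0 <= s ^+ n := exprn_ge0 n s0.
  rewrite mulr_ge0 ?exprn_ge0 //= ler_pdivlMr ?subr_gt0 //.
  have -> : n%:R * (s ^+ n) ^+ 2 * (1 - s) = s ^+ n * (n%:R * s ^+ n * (1 - s)).
    by ring.
  by rewrite -[X in _ <= X]mulr1 ler_wpM2l.
- exact: cvg_cst.
- by rewrite -(mul0r (1 - s)^-1); apply: cvgMr_tmp; apply: cvg_expr; rewrite ger0_norm.
Qed.

Section HittingTime.
Variables (R : realType) (T : finType) (adj : rel T).

Lemma srw_ge0 x y : 0 <= srw R adj x y.
Proof. by rewrite /srw; case: ifP => // _; rewrite invr_ge0 ler0n. Qed.

Lemma sum_srw x : (0 < deg adj x)%N -> \sum_y srw R adj x y = 1.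
Proof.
rewrite /srw -big_mkcond /= => deg_gt0.
transitivity (\sum_(y in [set y | adj x y]) (deg adj x)%:R^-1 : R).
  by apply: eq_bigl => y; rewrite inE.
by rewrite sumr_const -(mulr_natr _ #|_|) mulVf // pnatr_eq0 -lt0n.
Qed.

Variables (u v : T).
Hypothesis deg_gt0 : forall x, (0 < deg adj x)%N.

Lemma avoid_mass_ge0 t x : 0 <= avoid_mass R adj u v t x.
Proof.
elim: t x => [|t IH] x /=; first exact: ler0n.
by apply: sumr_ge0 => y _; rewrite mulr_ge0 ?srw_ge0.
Qed.

Definition survival t : R := \sum_(x | x != v) avoid_mass R adj u v t x.

Definition potential (h : T -> R) t : R :=
  \sum_(x | x != v) avoid_mass R adj u v t x * h x.

Lemma survival_ge0 t : 0 <= survival t.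
Proof. by apply: sumr_ge0 => x _; apply: avoid_mass_ge0. Qed.

Lemma survival0 : survival 0 + first_passage R adj u v 0 = 1.
Proof.
transitivity (\sum_x avoid_mass R adj u v 0 x); first by rewrite (bigD1 v) //= addrC.
by rewrite (bigD1 u) //= eqxx big1 ?addr0 // => x /negbTE ->.
Qed.

Lemma survivalS t : survival t.+1 + first_passage R adj u v t.+1 = survival t.
Proof.
transitivity (\sum_x avoid_mass R adj u v t.+1 x); first by rewrite (bigD1 v) //= addrC.
rewrite /= exchange_big /=.
by apply: eq_bigr => y _; rewrite -mulr_sumr sum_srw // mulr1.
Qed.

Lemma series_first_passage n :
  series (first_passage R adj u v) n.+1 = 1 - survival n.
Proof.
rewrite /series /=; elim: n => [|n IH]; first by rewrite big_nat1 -survival0; ring.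
by rewrite big_nat_recr //= IH -(survivalS n); ring.
Qed.

Variable h : T -> R.
Hypotheses (h_v : h v = 0) (h_ge0 : forall x, 0 <= h x).
Hypothesis h_harmonic : forall x, x != v -> h x = 1 + \sum_y srw R adj x y * h y.

Lemma potential_full t : potential h t = \sum_x avoid_mass R adj u v t x * h x.
Proof. by rewrite [RHS](bigD1 v) //= h_v mulr0 add0r. Qed.

Lemma potential0 : potential h 0 = h u.
Proof.
rewrite potential_full (bigD1 u) //= eqxx mul1r big1 ?addr0 // => x /negbTE ->.
by rewrite mul0r.
Qed.

Lemma potentialS t : potential h t.+1 = potential h t - survival t.
Proof.
rewrite potential_full /=.
under eq_bigr do rewrite mulr_suml.
rewrite exchange_big /= /potential /survival -sumrB; apply: eq_bigr => y y_v.
under eq_bigr do rewrite -mulrA.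
by rewrite -mulr_sumr (h_harmonic y_v); ring.
Qed.

Lemma survival_le_potential t : survival t <= potential h t.
Proof.
apply: ler_sum => x x_v; rewrite ler_peMr ?avoid_mass_ge0 //.
by rewrite (h_harmonic x_v) lerDl; apply: sumr_ge0 => y _; rewrite mulr_ge0 ?srw_ge0.
Qed.

Lemma potential_le_survival t :
  potential h t <= (1 + \sum_x h x) * survival t.
Proof.
rewrite mulr_sumr; apply: ler_sum => x _.
rewrite [X in _ <= X]mulrC ler_wpM2l ?avoid_mass_ge0 // (bigD1 x) //= addrCA lerDl.
by rewrite addr_ge0 ?sumr_ge0.
Qed.

Lemma series_hitting n :
  series (fun t => t%:R * first_passage R adj u v t) n.+1 =
  h u - potential h n - n%:R * survival n.
Proof.
rewrite /series /=; elim: n => [|n IH].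
  by rewrite big_nat1 potential0 !mul0r subrr subr0.
rewrite big_nat_recr //= IH potentialS -(survivalS n) -addn1 natrD.
ring.
Qed.

Let theta := 1 - (1 + \sum_x h x)^-1.

Lemma theta_ge0_lt1 : 0 <= theta < 1.
Proof.
have M1 : 1 <= 1 + \sum_x h x by rewrite lerDl sumr_ge0.
have M0 : 0 < 1 + \sum_x h x := lt_le_trans ltr01 M1.
by rewrite /theta subr_ge0 invf_le1 // M1 /= ltrBlDr ltrDl invr_gt0.
Qed.

Lemma potential_le_geometric t : potential h t <= theta ^+ t * h u.
Proof.
have M0 : 0 < 1 + \sum_x h x by rewrite ltr_pwDl ?sumr_ge0.
have /andP[th0 _] := theta_ge0_lt1.
elim: t => [|t IH]; first by rewrite potential0 mul1r.
rewrite potentialS exprS -mulrA.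
apply: le_trans (ler_wpM2l th0 IH).
have : potential h t / (1 + \sum_x h x) <= survival t.
  by rewrite ler_pdivrMr // mulrC potential_le_survival.
rewrite /theta mulrBl mul1r mulrC; lra.
Qed.

Theorem is_hitting_time_harmonic : @is_hitting_time R T adj u v (h u).
Proof.
have /andP[th0 th1] := theta_ge0_lt1.
have th_norm : `|theta| < 1 by rewrite ger0_norm.
have pot_ge0 t : 0 <= potential h t := le_trans (survival_ge0 t) (survival_le_potential t).
have surv_le t : survival t <= theta ^+ t * h u :=
  le_trans (survival_le_potential t) (potential_le_geometric t).
split; rewrite -cvg_shiftS.
- apply: (@squeeze_cvgr _ _ _ _ (fun n => 1 - theta ^+ n * h u) (fun=> 1)).
  + apply: nearW => n /=; rewrite series_first_passage.
    by rewrite lerB ?surv_le //= gerBl survival_ge0.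
  + have := cvgB (cvg_cst (1 : R)) (cvgMr_tmp (b := h u) (cvg_expr th_norm)).
    by rewrite mul0r subr0; apply.
  + exact: cvg_cst.
- apply: (@squeeze_cvgr _ _ _ _
      (fun n => h u - (theta ^+ n + n%:R * theta ^+ n) * h u) (fun=> h u)).
  + apply: nearW => n /=; rewrite series_hitting.
    have := ler_wpM2l (ler0n R n) (surv_le n).
    have := mulr_ge0 (ler0n R n) (survival_ge0 n).
    have := potential_le_geometric n; have := pot_ge0 n.
    move=> *; apply/andP; split; nra.
  + have := cvgB (cvg_cst (h u)) (cvgMr_tmp (b := h u)
      (cvgD (cvg_expr th_norm) (cvg_natmul_expr theta_ge0_lt1))).
    by rewrite addr0 mul0r subr0; apply.
  + exact: cvg_cst.
Qed.

End HittingTime.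

Lemma set2_eq (T : finType) (x y a b : T) :
  ([set x; y] == [set a; b]) = ((x, y) == (a, b)) || ((x, y) == (b, a)).
Proof.
apply/idP/idP; last by case/orP => /eqP [-> ->] //; rewrite finset.setUC.
move/eqP/setP=> E; move: (E x) (E y) (E a) (E b).
rewrite !inE !eqxx ?orbT /= !xpair_eqE.
by move=> /esym/orP[]/eqP E1 /esym/orP[]/eqP E2 /orP[]/eqP E3 /orP[]/eqP E4; subst; rewrite !eqxx ?orbT.
Qed.

Lemma handshake (T : finType) (adj : rel T) : symmetric adj -> irreflexive adj ->
  (#|graph_edges adj| * 2 = \sum_x deg adj x)%N.
Proof.
move=> adj_sym adj_irr.
have -> : (\sum_x deg adj x = \sum_(p | adj p.1 p.2) 1)%N.
  rewrite -(pair_big_dep xpredT adj (fun _ _ => 1%N)) /=.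
  by apply: eq_bigr => x _; rewrite /deg -sum1_card; apply: eq_bigl => y; rewrite inE.
rewrite (partition_big (fun p => [set p.1; p.2]) (mem (graph_edges adj))) /=; last first.
  by move=> [x y] /= xy; rewrite inE; apply/existsP; exists x; apply/existsP; exists y; rewrite xy /=.
rewrite -sum_nat_const; apply: eq_bigr => e.
rewrite inE => /existsP[a /existsP[b /andP[ab /eqP ->]]].
have a_neq_b : a != b by apply: contraTneq ab => ->; rewrite adj_irr.
transitivity (\sum_(p in pred2 (a, b) (b, a)) 1)%N.
  by rewrite sum1_card card2 xpair_eqE negb_and a_neq_b.
apply: eq_bigl => -[x y] /=; rewrite !inE set2_eq.
by rewrite andb_idl // => /orP[]/eqP[-> ->] //; rewrite adj_sym.
Qed.

Lemma modn_small_sub a n : (n <= a < n + n)%N -> (a %% n = a - n)%N.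
Proof.
case/andP=> na an; rewrite -[in LHS](subnK na) modnDr modn_small //.
by rewrite ltn_subLR.
Qed.

(* [lia] knows nothing about [%%] with a variable modulus; every residue below
   is of a number smaller than twice the modulus, so it is eliminated by cases. *)
Ltac case_small_mods :=
  repeat match goal with |- context [(?a %% ?n)%N] =>
    lazymatch a with context [(_ %% _)%N] => fail | _ => idtac end;
    let h := fresh in
    case: (ltnP a n) => h;
    [rewrite (modn_small h) | rewrite (@modn_small_sub a n); last (apply/andP; split; lia)]
  end.

Definition cdist N (x y : 'I_N) : nat := ((y + N - x) %% N)%N.

Section CycleComplement.
Variable N : nat.
Implicit Types x y : 'I_N.

Lemma cdistxx x : cdist x x = 0%N.
Proof. by rewrite /cdist addKn modnn. Qed.

Lemma cdist_lt x y : (cdist x y < N)%N.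
Proof. by rewrite ltn_pmod // (leq_ltn_trans _ (ltn_ord x)). Qed.

Lemma cdist_gt0 x y : x != y -> (0 < cdist x y)%N.
Proof.
rewrite -val_eqE => /eqP /= xy; have [xN yN] := (ltn_ord x, ltn_ord y).
rewrite /cdist; case_small_mods; lia.
Qed.

Lemma cdist_ordS x y : x != y -> cdist (ordS x) y = (cdist x y).-1.
Proof.
rewrite -val_eqE => /eqP /= xy; have [xN yN] := (ltn_ord x, ltn_ord y).
rewrite /cdist /=; case_small_mods; lia.
Qed.

Lemma cdist_ord_pred x y : cdist (ord_pred x) y = ((cdist x y).+1 %% N)%N.
Proof.
have [xN yN] := (ltn_ord x, ltn_ord y).
rewrite /cdist /=; case_small_mods; lia.
Qed.

Lemma cdistSx x : cdist (ordS x) x = N.-1.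
Proof. have xN := ltn_ord x; rewrite /cdist /=; case_small_mods; lia. Qed.

Lemma cdist_eq1 x y : (1 < N)%N -> (cdist x y == 1%N) = (y == ordS x).
Proof.
move=> N_gt1; have [xN yN] := (ltn_ord x, ltn_ord y).
rewrite -val_eqE /= /cdist; apply/eqP/eqP; case_small_mods; lia.
Qed.

Lemma sum_ordS_ord_pred (R : comPzRingType) (F : 'I_N -> R) c :
  \sum_x (F (ordS x) + c * F x + F (ord_pred x)) = (c + 2) * \sum_x F x.
Proof.
have sum_shift (f : 'I_N -> 'I_N) : injective f -> \sum_x F (f x) = \sum_x F x.
  by move=> f_inj; rewrite [RHS](reindex_inj f_inj).
rewrite !big_split /= (sum_shift _ (@ordS_inj N)) (sum_shift _ (@ord_pred_inj N)).
by rewrite -mulr_sumr; ring.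
Qed.

Hypothesis N_gt2 : (2 < N)%N.

Lemma GN1E x y : GN1 N x y = [&& y != x, y != ordS x & y != ord_pred x].
Proof.
rewrite /GN1 -!/(cdist _ _) !cdist_eq1 ?(ltnW N_gt2) //.
by rewrite [x == y]eq_sym [x == _]eq_sym (can2_eq (@ordSK N) (@ord_predK N)).
Qed.

Lemma ordS_neq x : ordS x != x.
Proof.
rewrite -val_eqE /=; have xN := ltn_ord x; case_small_mods; lia.
Qed.

Lemma ord_pred_neq x : ord_pred x != x.
Proof. by rewrite -{2}(ord_predK x) eq_sym ordS_neq. Qed.

Lemma ord_pred_neq_ordS x : ord_pred x != ordS x.
Proof.
rewrite -val_eqE /=; have xN := ltn_ord x; case_small_mods; lia.
Qed.

Lemma GN1_neighbours x : [set y | GN1 N x y] = ~: [set x; ordS x; ord_pred x].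
Proof. by apply/setP => y; rewrite !inE GN1E !negb_or andbA. Qed.

Lemma deg_GN1 x : deg (GN1 N) x = (N - 3)%N.
Proof.
rewrite /deg GN1_neighbours cardsCs finset.setCK card_ord finset.setUC cardsU1 cards2.
by rewrite !inE (negbTE (ord_pred_neq x)) (negbTE (ord_pred_neq_ordS x)) eq_sym ordS_neq.
Qed.

Lemma sum_split_GN1 (R : nmodType) x (F : 'I_N -> R) :
  \sum_y F y = F x + F (ordS x) + F (ord_pred x) + \sum_(y | GN1 N x y) F y.
Proof.
rewrite (bigD1 x) //= (bigD1 (ordS x)) ?ordS_neq //= (bigD1 (ord_pred x)) /=; last first.
  by rewrite ord_pred_neq ord_pred_neq_ordS.
by rewrite !addrA; congr (_ + _); apply: eq_bigl => y; rewrite GN1E andbA.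
Qed.

Lemma card_edges_GN1 : #|graph_edges (GN1 N)| = (N * (N - 3) %/ 2)%N.
Proof.
have GN1_sym : symmetric (GN1 N).
  by move=> x y; rewrite /GN1 eq_sym; congr andb; rewrite andbC.
have GN1_irr : irreflexive (GN1 N) by move=> x; rewrite /GN1 eqxx.
rewrite -(mulnK #|_| (isT : (0 < 2)%N)) handshake //.
by under eq_bigr do rewrite deg_GN1; rewrite sum_nat_const card_ord.
Qed.

End CycleComplement.

Section HitFormula.
Variables (R : realType) (N : nat) (Delta rho : R).

Definition hit_scale : R := (N * (N - 3))%:R / (Delta * (rho ^+ N + 1)).

Definition hit_formula (q : nat) : R :=
  hit_scale * (rho ^+ N - 1 + (-1) ^+ q * (rho ^+ q - rho ^+ (N - q))).

Definition hit_rec_const : R := N%:R * hit_scale * (rho ^+ N - 1).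

Lemma hit_formula0 : hit_formula 0 = 0.
Proof. by rewrite /hit_formula subn0 !expr0; ring. Qed.

Lemma hit_formulaN : odd N -> hit_formula N = 0.
Proof.
by move=> N_odd; rewrite /hit_formula subnn expr0 -signr_odd N_odd expr1; ring.
Qed.

Lemma hit_formula_ge0 q : 0 < Delta -> 1 <= rho -> (q <= N)%N -> 0 <= hit_formula q.
Proof.
move=> Delta_gt0 rho_ge1 qN.
have rhoN_ge0 : 0 <= rho ^+ N by rewrite exprn_ge0 // (le_trans ler01).
apply: mulr_ge0; first by rewrite divr_ge0 // mulr_ge0 ?addr_ge0 // ltW.
rewrite -(subnKC qN) exprD addKn.
have a1 : 1 <= rho ^+ q by rewrite exprn_ege1.
have b1 : 1 <= rho ^+ (N - q) by rewrite exprn_ege1.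
move: a1 b1; set a := rho ^+ q; set b := rho ^+ (N - q) => a1 b1.
rewrite -signr_odd; case: (odd q); rewrite ?expr1 ?expr0; nra.
Qed.

Hypothesis rho_root : rho ^+ 2 - (N%:R - 2) * rho + 1 = 0.

(* The difference of the two sides is a multiple of the characteristic polynomial of rho. *)
Lemma hit_formula_rec q : (0 < q < N)%N ->
  hit_formula q.-1 + (N%:R - 2) * hit_formula q + hit_formula q.+1 = hit_rec_const.
Proof.
case: q => // k /andP[_ kN] /=; rewrite /hit_formula /hit_rec_const.
set m := (N - k.+2)%N.
have -> : (N - k = m.+2)%N by rewrite /m; lia.
have -> : (N - k.+1 = m.+1)%N by rewrite /m; lia.
apply/eqP; rewrite -subr_eq0; apply/eqP.
transitivity (hit_scale * (-1) ^+ k * (rho ^+ k - rho ^+ m) *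
              (rho ^+ 2 - (N%:R - 2) * rho + 1)).
  by rewrite !exprS; ring.
by rewrite rho_root mulr0.
Qed.

Hypothesis Delta_rho : Delta = 2 * rho - (N%:R - 2).

Lemma hit_formula_boundary : odd N -> Delta * (rho ^+ N + 1) != 0 ->
  hit_formula 1 + hit_formula N.-1 = hit_rec_const - (N * (N - 3))%:R.
Proof.
move=> N_odd nz; have N_gt0 : (0 < N)%N by case: N N_odd.
have sgn : (-1) ^+ N.-1 = 1 :> R.
  by rewrite -signr_odd; move: N_odd; rewrite -(prednK N_gt0) /= => /negbTE ->.
have rhoN : rho ^+ N = rho * rho ^+ N.-1 by rewrite -exprS prednK.
have -> : (N * (N - 3))%:R = hit_scale * (Delta * (rho ^+ N + 1)) by rewrite divfK.
rewrite /hit_formula /hit_rec_const (_ : N - N.-1 = 1)%N; last by lia.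
rewrite subn1 sgn rhoN Delta_rho; apply/eqP; rewrite -subr_eq0; apply/eqP.
transitivity (2 * hit_scale * rho ^+ N.-1 * (rho ^+ 2 - (N%:R - 2) * rho + 1)).
  by ring.
by rewrite rho_root mulr0.
Qed.

End HitFormula.

Section HittingTimeGN1.
Variables (R : realType) (N : nat) (Delta rho : R).
Hypotheses (N_gt4 : (4 < N)%N) (N_odd : odd N).
Hypotheses (Delta_gt0 : 0 < Delta) (rho_ge1 : 1 <= rho).
Hypothesis rho_root : rho ^+ 2 - (N%:R - 2) * rho + 1 = 0.
Hypothesis Delta_rho : Delta = 2 * rho - (N%:R - 2).
Variable v : 'I_N.

Let N_gt2 : (2 < N)%N. Proof. exact: ltn_trans N_gt4. Qed.

Let h (x : 'I_N) : R := hit_formula N Delta rho (cdist x v).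

Let C := hit_rec_const N Delta rho.

Lemma hit_formula_cdist_rec x : x != v ->
  h (ordS x) + (N%:R - 2) * h x + h (ord_pred x) = C.
Proof.
move=> x_v; rewrite /h cdist_ordS // cdist_ord_pred.
have /andP[q_gt0 q_lt] : (0 < cdist x v < N)%N by rewrite cdist_gt0 ?cdist_lt.
have -> : hit_formula N Delta rho ((cdist x v).+1 %% N) =
          hit_formula N Delta rho (cdist x v).+1.
  case: (ltnP (cdist x v).+1 N) => [/modn_small -> // | ?].
  by rewrite (_ : (cdist x v).+1 = N); [rewrite modnn hit_formula0 hit_formulaN | lia].
by apply: hit_formula_rec; rewrite ?q_gt0.
Qed.

Let scale_denom_neq0 : Delta * (rho ^+ N + 1) != 0.
Proof.
have : 0 <= rho ^+ N := exprn_ge0 N (le_trans ler01 rho_ge1).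
by move=> ?; rewrite mulf_neq0 // gt_eqF //; lra.
Qed.

Lemma sum_hit_formula_cdist : \sum_x h x = C - (N%:R - 3).
Proof.
have N_gt0 : (0 < N)%N by lia.
have N_neq0 : N%:R != 0 :> R by rewrite pnatr_eq0 -lt0n.
have boundary : h (ordS v) + h (ord_pred v) = C - (N * (N - 3))%:R.
  rewrite /h cdistSx cdist_ord_pred cdistxx modn_small ?(ltnW N_gt2) // addrC.
  exact: hit_formula_boundary.
have := sum_ordS_ord_pred h (N%:R - 2).
rewrite (bigD1 v) //= [h v]/h cdistxx hit_formula0 mulr0 addr0 boundary.
rewrite (eq_bigr (fun=> C)) => [|x /hit_formula_cdist_rec //].
rewrite sumr_const cardC1 card_ord subrK => sum_h.
apply: (mulfI N_neq0); rewrite -{}sum_h.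
by rewrite natrM -[C *+ _]mulr_natr -subn1 !natrB ?(ltnW N_gt2) //; ring.
Qed.

Lemma hit_formula_cdist_harmonic x : x != v ->
  h x = 1 + \sum_y srw R (GN1 N) x y * h y.
Proof.
move=> x_v.
have N3_neq0 : N%:R - 3 != 0 :> R.
  by rewrite -natrB ?(ltnW N_gt2) // pnatr_eq0 subn_eq0 -ltnNge ltnW.
have mean : \sum_y srw R (GN1 N) x y * h y =
            (\sum_y h y - (h x + h (ordS x) + h (ord_pred x))) / (N%:R - 3).
  rewrite (sum_split_GN1 N_gt2 x h) [_ + \sum_(y | _) _]addrC addrK mulr_suml.
  rewrite [RHS]big_mkcond /=; apply: eq_bigr => y _.
  rewrite /srw deg_GN1 // natrB ?(ltnW N_gt2) //.
  by case: ifP; rewrite ?mul0r // mulrC.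
rewrite mean sum_hit_formula_cdist -(hit_formula_cdist_rec x_v).
by field.
Qed.

Theorem hitting_time_GN1 u : @is_hitting_time R _ (GN1 N) u v (h u).
Proof.
apply: is_hitting_time_harmonic.
- by move=> x; rewrite (deg_GN1 N_gt2) subn_gt0 ltnW.
- by rewrite /h cdistxx hit_formula0.
- by move=> x; apply: hit_formula_ge0 => //; exact: ltnW (cdist_lt x v).
- exact: hit_formula_cdist_harmonic.
Qed.

End HittingTimeGN1.

Lemma sqrt_rho_spec (R : realType) N : (4 < N)%N ->
  let Delta : R := Num.sqrt (N%:R * (N%:R - 4)) in
  let rho : R := (N%:R - 2 + Delta) / 2 in
  [/\ 0 < Delta, 1 <= rho, rho ^+ 2 - (N%:R - 2) * rho + 1 = 0
    & Delta = 2 * rho - (N%:R - 2)].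
Proof.
move=> N_gt4 Delta rho.
have N_ge5 : 5 <= N%:R :> R by rewrite (ler_nat R 5 N).
have disc_gt0 : 0 < N%:R * (N%:R - 4) :> R by apply: mulr_gt0; lra.
have Delta_gt0 : 0 < Delta by rewrite sqrtr_gt0.
have Delta_sq : Delta ^+ 2 = N%:R * (N%:R - 4) by rewrite sqr_sqrtr // ltW.
by split; rewrite // /rho; nra.
Qed.

Theorem corollary4p2 (R : realType) (N : nat) (hN : (5 <= N)%N) (hodd : odd N) :
  let Delta : R := Num.sqrt (N%:R * (N%:R - 4)) in
  let rho : R := (N%:R - 2 + Delta) / 2 in
  #|graph_edges (GN1 N)| = (N * (N - 3) %/ 2)%N /\
  forall u v : 'I_N,
    let q := ((nat_of_ord v + N - nat_of_ord u) %% N)%N in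
    @is_hitting_time R _ (GN1 N) u v
      ((N * (N - 3))%:R / (Delta * (rho ^+ N + 1)) *
        (rho ^+ N - 1 + (-1) ^+ q * (rho ^+ q - rho ^+ (N - q)))).
Proof.
move=> Delta rho; have [Delta_gt0 rho_ge1 rho_root Delta_rho] := sqrt_rho_spec R hN.
split; first exact: card_edges_GN1 (ltnW (ltnW hN)).
move=> u v q.
exact: (hitting_time_GN1 hN hodd Delta_gt0 rho_ge1 rho_root Delta_rho v u).
Qed.
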